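(* Let $u_1,\dots,u_n$ be words over $[n]$ with $u_j\in[n]^{k_j}$ ($k_j\geq0$). Then \[ \Pi\left(\begin{bmatrix}e_{u_1}\\ \vdots\\ e_{u_n}\end{bmatrix}\right)=\sum_{j=1}^n\left(e_{u_j}\otimes f_j-\frac{\delta^l(l_{ju_j})[1\oplus\cdots\oplus1]}{k_j+1}\right), \] where $ju_j$ denotes the word obtained by prefixing the letter $j$ to $u_j$.
   Context: Let $\{e_1,\dots,e_n\}$ be an orthonormal basis of $\mathbb{C}^n$, $\{f_1,\dots,f_n\}$ the standard basis. The full Fock space is $\mathcal{F}(\mathbb{C}^n)=\mathbb{C}1\oplus\bigoplus_{k\geq1}(\mathbb{C}^n)^{\otimes k}$; for a word $w=i_1\cdots i_k$ over $[n]=\{1,\dots,n\}$, $e_w=e_{i_1}\otimes\cdots\otimes e_{i_k}$, $e_\epsilon=1$; $[n]^k$ is the set of words of length $k$. Let $l_je_w=e_{jw}$, $l_u=l_{u_1}\cdots l_{u_p}$ for $u=u_1\cdots u_p$, $s_j=l_j+l_j^*$. Let $\mathbb{C}^l_{\langle n\rangle}$ (resp. $\mathbb{C}^s_{\langle n\rangle}$) be the unital algebra generated by $l_1,\dots,l_n$ (resp. $s_1,\dots,s_n$), and $\delta^l$ (resp. $\delta^s$) the cyclic gradient: the linear map into $n$-tuples ($\cong$ algebra $\otimes\,\mathbb{C}^n$) with $\delta^l(l_{i_1}\cdots l_{i_p})=\sum_{j=1}^p l_{i_{j+1}}\cdots l_{i_p}l_{i_1}\cdots l_{i_{j-1}}\otimes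 f_{i_j}$ (resp. the same with $s$ in place of $l$). For a tuple $(x_1,\dots,x_n)$ of operators, $(x_1,\dots,x_n)[1\oplus\cdots\oplus1]=(x_11,\dots,x_n1)\in\mathcal{F}(\mathbb{C}^n)^n$. The free Leray projection $\Pi$ (on the Fock space side) is the orthogonal projection of $\mathcal{F}(\mathbb{C}^n)^n$ onto $\mathcal{F}(\mathbb{C}^n)^n\ominus\overline{\delta^s(\mathbb{C}^s_{\langle n\rangle})[1\oplus\cdots\oplus1]}$, the closure of the image on the vacuum of the free divergence-free vector field; here $\delta^s(\mathbb{C}^s_{\langle n\rangle})[1\oplus\cdots\oplus1]=\delta^l(\mathbb{C}^l_{\langle n\rangle})[1\oplus\cdots\oplus1]$. Vectors of $\mathcal{F}(\mathbb{C}^n)^n$ are identified with $\mathcal{F}(\mathbb{C}^n)\otimes\mathbb{C}^n$ via $(\xi_1,\dots,\xi_n)\mapsto\sum_j\xi_j\otimes f_j$. *)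

From HB Require Import structures.
From mathcomp Require Import all_boot all_order all_algebra.
From mathcomp Require Import reals.
From mathcomp.real_closed Require Import complex.
Set Implicit Arguments. Unset Strict Implicit. Unset Printing Implicit Defensive.
Import Order.TTheory GRing.Theory Num.Theory.
Local Open Scope ring_scope.

(* Words over [n] = {0,...,n-1} (0-based indexing of the letters 1..n). *)
Definition word (n : nat) := seq 'I_n.

(* A vector of the algebraic tensor product F(C^n) (x) C^n, i.e. a finite
   linear combination  sum c * (e_w (x) f_i)  of the orthonormal basis vectors
   e_w (x) f_i, given as a finite formal sum (list of (c, (w, i))).
   Via (xi_1..xi_n) |-> sum_j xi_j (x) f_j this is F(C^n)^n. *)
Definition fvec (C : Type) (n : nat) := seq (C * (word n * 'I_n)).

Section FockVec.
Variables (R : realType) (n : nat).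
Notation C := (R[i]).
Notation V := (fvec C n).

Definition ebasis (w : word n) (i : 'I_n) : V := [:: (1, (w, i))].
Definition fadd (x y : V) : V := x ++ y.
Definition fscale (c : C) (x : V) : V := [seq (c * t.1, t.2) | t <- x].
Definition fsub (x y : V) : V := fadd x (fscale (-1) y).

(* Inner product (linear in the first, conjugate-linear in the second
   variable), determined by orthonormality of the e_w (x) f_i. *)
Definition finner (x y : V) : C :=
  \sum_(t <- x) \sum_(s <- y) (t.2 == s.2)%:R * t.1 * (s.1)^*.
Definition fnorm2 (x : V) : C := finner x x.

(* Noncommutative polynomials in l_1..l_n, i.e. elements of C^l_<n>, as
   finite formal sums  sum c * l_u  (the monomials l_u are linearly
   independent since l_u 1 = e_u). *)
Definition lpoly := seq (C * word n).

(* delta^l(l_u)[1 (+) ... (+) 1] for u = u_1...u_p :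
   sum_{j=1}^p  e_{u_{j+1}...u_p u_1...u_{j-1}} (x) f_{u_j}. *)
Definition cycgrad_vac (u : word n) : V :=
  [seq (1, (drop p.1.+1 u ++ take p.1 u, p.2)) | p <- zip (iota 0 (size u)) u].

Definition grad_vac (P : lpoly) : V :=
  flatten [seq fscale t.1 (cycgrad_vac t.2) | t <- P].

(* The free Leray projection: Pi is the orthogonal projection of
   F(C^n)^n onto the orthogonal complement of the closure of
   D := delta^l(C^l_<n>)[1 (+) ... (+) 1].  For vectors x, y,
   Pi x = y  iff  y is orthogonal to D (equivalently to its closure)
   and x - y lies in the closure of D. *)
Definition leray_proj_is (x y : V) : Prop :=
  (forall P : lpoly, finner y (grad_vac P) = 0) /\
  (forall eps : C, 0 < eps ->
     exists P : lpoly, fnorm2 (fsub (fsub x y) (grad_vac P)) < eps).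

End FockVec.

From HB Require Import structures.
From mathcomp Require Import all_boot all_order all_algebra.
From mathcomp Require Import reals.
From mathcomp.real_closed Require Import complex.
Import Order.TTheory GRing.Theory Num.Theory.
Set Implicit Arguments. Unset Strict Implicit.

(* Read the basis vector e_w (x) f_i as the word w i.  Then
   delta^l(l_v)[1 (+) ... (+) 1] is the sum of the basis vectors read as the
   cyclic rotations of v, so a vector is orthogonal to every such gradient as
   soon as its coefficients sum to zero along every rotation class.  The word
   of e_{u_j} (x) f_j is u_j j, a rotation of j u_j, while the gradient of
   l_{j u_j} has k_j + 1 terms; along any rotation class it therefore carries
   k_j + 1 times the weight of e_{u_j} (x) f_j, which the factor 1/(k_j + 1)
   cancels.  The difference of the two sides is exactly the gradient of
   sum_j l_{j u_j} / (k_j + 1), so no approximation is needed. *)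

Lemma count_memE (T : eqType) (a : T) (s : seq T) :
  count_mem a s = \sum_(x <- s) (x == a).
Proof. by elim: s => [|x s IHs]; rewrite ?big_nil ?big_cons //= IHs. Qed.

Lemma sum_count_memC (T : eqType) (s t : seq T) :
  \sum_(x <- s) count_mem x t = \sum_(y <- t) count_mem y s.
Proof.
under eq_bigr do rewrite count_memE.
rewrite exchange_big; apply: eq_bigr => y _.
by rewrite count_memE; apply: eq_bigr => x _; rewrite eq_sym.
Qed.

Section Rotations.
Variable T : eqType.
Implicit Types v w z : seq T.

Definition rotations w := [seq rot m w | m <- iota 0 (size w)].

Lemma rot_succ_rotations w :
  [seq rot m.+1 w | m <- iota 0 (size w)] = rot 1 (rotations w).
Proof.
case: w => [|x s] //; set w := x :: s.
have -> : [seq rot m.+1 w | m <- iota 0 (size w)] = [seq rot m w | m <- iota 1 (size w)].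
  by rewrite -[1%N]addn0 iotaDl -map_comp.
rewrite /rotations (_ : iota 0 (size w) = 0 :: iota 1 (size s)) // rot1_cons.
have -> : size w = (size s + 1)%N by rewrite addn1.
by rewrite iotaD map_cat cats1 rot_oversize ?rot0 ?add1n.
Qed.

Lemma count_rotations_rot1 z w :
  count_mem (rot 1 z) (rotations w) = count_mem z (rotations w).
Proof.
have rot1_perm : perm_eq (rot 1 (rotations w)) (rotations w) by rewrite perm_rot.
rewrite -(permP rot1_perm) -rot_succ_rotations.
have -> : [seq rot m.+1 w | m <- iota 0 (size w)] = map (rot 1) (rotations w).
  by rewrite -map_comp; apply/eq_in_map => m; rewrite mem_iota /= => /rotS.
by rewrite count_map; apply: eq_count => r /=; rewrite (inj_eq (@rot_inj _ _)).
Qed.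

Lemma count_rotations_rot m z w : m <= size z ->
  count_mem (rot m z) (rotations w) = count_mem z (rotations w).
Proof.
elim: m => [|m IHm] le_mz; first by rewrite rot0.
by rewrite rotS // count_rotations_rot1 IHm // ltnW.
Qed.

Lemma sum_count_rotations v w :
  \sum_(r <- rotations w) count_mem r (rotations v)
    = size v * count_mem v (rotations w).
Proof.
rewrite sum_count_memC {1}/rotations big_map.
rewrite (eq_big_seq (fun=> count_mem v (rotations w))) => [|m].
  by rewrite big_const_seq iter_addn_0 count_predT size_iota mulnC.
by rewrite mem_iota => /andP[_ lt_mv]; rewrite count_rotations_rot // ltnW.
Qed.

Lemma map_rcons_drop_take w :
  [seq rcons (drop p.1.+1 w ++ take p.1 w) p.2 | p <- zip (iota 0 (size w)) w]
    = rot 1 (rotations w).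
Proof.
case: w => [|x s] //; set w := x :: s.
have -> : zip (iota 0 (size w)) w = [seq (m, nth x w m) | m <- iota 0 (size w)].
  by rewrite -{2}(mkseq_nth x w) -{1}(map_id (iota 0 (size w))) zip_map.
rewrite -rot_succ_rotations -map_comp; apply/eq_in_map => m.
by rewrite mem_iota => /andP[_ lt_mw] /=; rewrite /rot (take_nth x lt_mw) rcons_cat.
Qed.

Lemma pair_eq_rcons (b c : seq T * T) : (rcons b.1 b.2 == rcons c.1 c.2) = (b == c).
Proof. by case: b c => [s x] [t y]; rewrite eqseq_rcons. Qed.

End Rotations.

Local Open Scope ring_scope.

Section FockCoefficients.
Variables (R : realType) (n : nat).
Local Notation C := (R[i]).
Local Notation V := (fvec C n).
Implicit Types (x y : V) (w : word n) (b : word n * 'I_n).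

Definition fcoef x b : C := \sum_(t <- x) (t.2 == b)%:R * t.1.

Lemma finner_fcoef x y : finner x y = \sum_(s <- y) fcoef x s.2 * s.1^*.
Proof. by rewrite /finner exchange_big; apply: eq_bigr => s _; rewrite mulr_suml. Qed.

Lemma fnorm2_eq0 x : (forall b, fcoef x b = 0) -> fnorm2 x = 0.
Proof. by move=> x0; rewrite /fnorm2 finner_fcoef big1 // => s _; rewrite x0 mul0r. Qed.

Lemma fcoef_fadd x y b : fcoef (fadd x y) b = fcoef x b + fcoef y b.
Proof. exact: big_cat. Qed.

Lemma fcoef_fscale c x b : fcoef (fscale c x) b = c * fcoef x b.
Proof. by rewrite /fcoef big_map mulr_sumr; apply: eq_bigr => t _; rewrite mulrCA. Qed.

Lemma fcoef_fsub x y b : fcoef (fsub x y) b = fcoef x b - fcoef y b.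
Proof. by rewrite fcoef_fadd fcoef_fscale mulN1r. Qed.

Lemma fcoef_flatten (A : Type) (F : A -> V) (s : seq A) b :
  fcoef (flatten (map F s)) b = \sum_(a <- s) fcoef (F a) b.
Proof.
elim: s => [|a s IHs]; first by rewrite big_nil /fcoef big_nil.
by rewrite big_cons -IHs -fcoef_fadd.
Qed.

Lemma fcoef_ebasis w i b : fcoef (@ebasis R n w i) b = ((w, i) == b)%:R.
Proof. by rewrite /fcoef big_seq1 mulr1. Qed.

Lemma big_cycgrad_vac w (F : C -> word n -> C) :
  \sum_(t <- @cycgrad_vac R n w) F t.1 (rcons t.2.1 t.2.2)
    = \sum_(r <- rotations w) F 1 r.
Proof.
transitivity (\sum_(r <- rot 1 (rotations w)) F 1 r); last by apply/perm_big; rewrite perm_rot.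
by rewrite -map_rcons_drop_take !big_map.
Qed.

Lemma fcoef_cycgrad_vac w b :
  fcoef (@cycgrad_vac R n w) b = (count_mem (rcons b.1 b.2) (rotations w))%:R.
Proof.
rewrite count_memE natr_sum /fcoef.
under [LHS]eq_bigr do rewrite -pair_eq_rcons.
under [RHS]eq_bigr do rewrite -[_%:R]mulr1.
exact: (big_cycgrad_vac w (fun c r => (r == rcons b.1 b.2)%:R * c)).
Qed.

Lemma fcoef_grad_vac (P : lpoly R n) b :
  fcoef (grad_vac P) b = \sum_(t <- P) t.1 * fcoef (@cycgrad_vac R n t.2) b.
Proof. by rewrite fcoef_flatten; apply: eq_bigr => t _; rewrite fcoef_fscale. Qed.

Lemma finner_grad_vac_eq0 x (H : word n -> C) :
  (forall b, fcoef x b = H (rcons b.1 b.2)) ->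
  (forall w, \sum_(r <- rotations w) H r = 0) ->
  forall P : lpoly R n, finner x (grad_vac P) = 0.
Proof.
move=> xH H0 P; rewrite finner_fcoef big_flatten big_map; apply: big1 => t _.
rewrite big_map; under eq_bigr do rewrite /= xH.
transitivity (\sum_(r <- rotations t.2) H r * (t.1 * 1)^*).
  exact: (big_cycgrad_vac _ (fun c r => H r * (t.1 * c)^*)).
by rewrite -mulr_suml H0 mul0r.
Qed.

End FockCoefficients.

Section LerayImage.
Variables (R : realType) (n : nat) (k : 'I_n -> nat)
  (u : forall j : 'I_n, (k j).-tuple 'I_n).
Local Notation C := (R[i]).
Implicit Types (w r : word n) (b : word n * 'I_n).

Definition ebasis_sum : fvec C n :=
  flatten [seq @ebasis R n (u j : word n) j | j <- enum 'I_n].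

Definition leray_image : fvec C n :=
  flatten [seq fadd (@ebasis R n (u j : word n) j)
                    (fscale (- ((k j).+1%:R)^-1)
                            (grad_vac [:: (1 : C, j :: (u j : word n))]))
          | j <- enum 'I_n].

Definition leray_poly : lpoly R n :=
  [seq (((k j).+1%:R)^-1, j :: (u j : word n)) | j <- enum 'I_n].

Definition leray_coef r : C :=
  \sum_(j <- enum 'I_n) ((r == rcons (u j) j)%:R
    - ((k j).+1%:R)^-1 * (count_mem r (rotations (j :: (u j : word n))))%:R).

Lemma fcoef_leray_image b :
  fcoef leray_image b = fcoef ebasis_sum b - fcoef (grad_vac leray_poly) b.
Proof.
rewrite fcoef_grad_vac /leray_poly big_map !fcoef_flatten -sumrB; apply: eq_bigr => j _.
by rewrite fcoef_fadd fcoef_fscale fcoef_grad_vac big_seq1 mul1r mulNr.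
Qed.

Lemma fcoef_leray_image_rcons b : fcoef leray_image b = leray_coef (rcons b.1 b.2).
Proof.
rewrite fcoef_leray_image fcoef_grad_vac /leray_poly big_map fcoef_flatten -sumrB.
apply: eq_bigr => j _.
by rewrite fcoef_ebasis fcoef_cycgrad_vac eq_sym -pair_eq_rcons.
Qed.

Lemma sum_rotations_leray_coef w : \sum_(r <- rotations w) leray_coef r = 0.
Proof.
rewrite exchange_big; apply: big1 => j _.
rewrite sumrB -mulr_sumr -!natr_sum -count_memE sum_count_rotations [size _]/= size_tuple.
rewrite -rot1_cons count_rotations_rot1 natrM mulrA mulVf ?pnatr_eq0 //.
by rewrite mul1r subrr.
Qed.

End LerayImage.

Theorem corollary3p5 (R : realType) (n : nat) (k : 'I_n -> nat)
    (u : forall j : 'I_n, (k j).-tuple 'I_n) :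
  leray_proj_is
    (flatten [seq @ebasis R n (u j : word n) j | j <- enum 'I_n])
    (flatten [seq fadd (@ebasis R n (u j : word n) j)
                       (fscale (- ((k j).+1%:R)^-1)
                               (grad_vac [:: (1 : R[i], j :: (u j : word n))]))
             | j <- enum 'I_n]).
Proof.
split.
  apply: (finner_grad_vac_eq0 (H := leray_coef R u)).
    exact: fcoef_leray_image_rcons.
  exact: sum_rotations_leray_coef.
move=> eps eps_gt0; exists (leray_poly R u).
rewrite fnorm2_eq0 // => b.
by rewrite !fcoef_fsub fcoef_leray_image subKr subrr.
Qed.
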